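(* Consider a single base station (BS) $m$ with $a_m$ active antennas, $N_m$ available physical resource blocks (PRBs) of bandwidth $\bar b$, serving a set $\mu(m)$ of UEs with zero-forcing precoding, under fixed inter-cell interference. For UE $k\in\mu(m)$ let $\underline{R}_k>0$ be its minimum rate requirement, $\beta_k>0$ its large-scale fading, $I_k\ge 0$ the (fixed) inter-cell interference and $N>0$ the noise power at UE $k$, and let $L$ denote the number of UEs spatially multiplexed on a PRB ($L=1$ for no spatial multiplexing (NSM), $L=|\mu(m)|$ for spatial multiplexing (SM)), with $a_m>L$. When UE $k$ is given transmit power $p>0$ on each of its PRBs, the number of PRBs it needs to meet its rate requirement is $$\alpha_k(p)=\frac{\underline{R}_k}{\bar b\,\log_2\!\left(1+\frac{(a_m-L)\beta_k p}{I_k+N}\right)}.$$ The power-allocation-dependent part of the BS power consumption is $$P_m(\mathbf p)=\sum_{k\in\mu(m)}\alpha_k(p_k)\left(\frac{1}{\eta_{PA}}p_k+C\right),$$ where $\eta_{PA}\in(0,1]$ is the power amplifier efficiency and $C>0$ is the per-PRB signal-processing power cost. Let $p^*$ denote the candidate optimal power(s) described below, and suppose that for every $\tilde p>p^*$ the condition $$\alpha_k(\tilde p)\tilde p-\alpha_k(p^* )p^*\ \ge\ \delta\, C\,\eta_{PA},\qquad \delta=\alpha_k(p^* )-\alpha_k(\tilde p),$$ holds. Then: (i) in the NSM case, where all UEs of BS $m$ receive the same power $p_m$ and the PRBs are shared so that $\sum_{k\in\mu(m)}\alpha_k(p_m)\le N_m$ is required, the optimal power allocation (one that satisfies all rate requirements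 while minimizing $P_m$) is the power $p_m^*$ satisfying $\sum_{k\in\mu(m)}\alpha_k(p_m^* )=N_m$; (ii) in the SM case, where each UE may use up to $N_m$ PRBs, i.e. $\alpha_k(p_k)\le N_m$ for each $k$, the optimal individual power allocation $\mathbf p^*=(p_k^* )_{k\in\mu(m)}$ is the one for which every UE is assigned the maximum number of available PRBs, i.e. $\alpha_k(p_k^* )=N_m$ for all $k\in\mu(m)$.
   Context: Downlink multi-user massive MIMO cell with zero-forcing precoding; achievable rate of UE $k$ using $\alpha$ PRBs each with power $p$ is $\bar b\,\alpha\log_2(1+(a_m-L)\beta_k p/(I_k+N))$. Powers are equal across all PRBs assigned to a given UE; numbers of PRBs are treated as real quantities given by $\alpha_k(p)$. Powers $\tilde p<p^*$ are infeasible in the sense that they would require more PRBs than available (leading to outages). *)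

From Stdlib Require Import Reals List.
Open Scope R_scope.

Definition log2 (x : R) : R := ln x / ln 2.

(* finite sum over UE indices k = 0, ..., K-1 (the set mu(m) of K UEs) *)
Definition sumUE (K : nat) (f : nat -> R) : R :=
  fold_right Rplus 0 (map f (seq 0 K)).

Definition alpha (am L : nat) (bbar : R) (Rmin beta I : nat -> R) (N : R)
  (k : nat) (p : R) : R :=
  Rmin k / (bbar * log2 (1 + (INR am - INR L) * beta k * p / (I k + N))).

Definition Pm (K am L : nat) (bbar : R) (Rmin beta I : nat -> R) (N : R)
  (eta C : R) (p : nat -> R) : R :=
  sumUE K (fun k => alpha am L bbar Rmin beta I N k (p k) * (p k / eta + C)).

(** Every [alpha_k] is strictly decreasing in the power, so a feasible power
    can never lie below [p*]: in the shared-PRB case the total number of PRBs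
    [sum_k alpha_k] would exceed [N_m], in the per-UE case [alpha_k] alone would.
    For a power [p >= p*] the hypothesis on [p*] says that the extra transmit
    power [alpha_k p * p - alpha_k p* * p*] outweighs the saved processing power
    [(alpha_k p* - alpha_k p) * C * eta_PA], so every summand of [P_m] grows. *)
From Stdlib Require Import Reals List Lra Lia.
Open Scope R_scope.

Lemma sum_map_le {A : Type} (f g : A -> R) (l : list A) :
  (forall x, In x l -> f x <= g x) ->
  fold_right Rplus 0 (map f l) <= fold_right Rplus 0 (map g l).
Proof.
  induction l as [|x l IH]; intros Hfg; simpl; [lra|].
  assert (f x <= g x) by (apply Hfg; left; reflexivity).
  assert (fold_right Rplus 0 (map f l) <= fold_right Rplus 0 (map g l))
    by (apply IH; intros y Hy; apply Hfg; right; exact Hy).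
  lra.
Qed.

Lemma sum_map_lt {A : Type} (f g : A -> R) (l : list A) :
  l <> nil -> (forall x, In x l -> f x < g x) ->
  fold_right Rplus 0 (map f l) < fold_right Rplus 0 (map g l).
Proof.
  destruct l as [|x l]; intros Hl Hfg; [contradiction|simpl].
  assert (f x < g x) by (apply Hfg; left; reflexivity).
  assert (fold_right Rplus 0 (map f l) <= fold_right Rplus 0 (map g l))
    by (apply sum_map_le; intros y Hy; apply Rlt_le, Hfg; right; exact Hy).
  lra.
Qed.

Lemma sumUE_le (K : nat) (f g : nat -> R) :
  (forall k, (k < K)%nat -> f k <= g k) -> sumUE K f <= sumUE K g.
Proof.
  intros Hfg; apply sum_map_le; intros k Hk.
  apply in_seq in Hk; apply Hfg; lia.
Qed.

Lemma sumUE_lt (K : nat) (f g : nat -> R) :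
  (0 < K)%nat -> (forall k, (k < K)%nat -> f k < g k) -> sumUE K f < sumUE K g.
Proof.
  intros HK Hfg; apply sum_map_lt.
  - destruct K as [|K]; [lia|discriminate].
  - intros k Hk; apply in_seq in Hk; apply Hfg; lia.
Qed.

Lemma log2_pos (x : R) : 1 < x -> 0 < log2 x.
Proof.
  intros Hx; unfold log2.
  apply Rdiv_lt_0_compat; rewrite <- ln_1; apply ln_increasing; lra.
Qed.

Lemma log2_increasing (x y : R) : 0 < x -> x < y -> log2 x < log2 y.
Proof.
  intros Hx Hxy; unfold log2, Rdiv.
  apply Rmult_lt_compat_r; [|apply ln_increasing; assumption].
  apply Rinv_0_lt_compat; rewrite <- ln_1; apply ln_increasing; lra.
Qed.

Definition extra_power_dominates (a : R -> R) (C eta ps : R) : Prop :=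
  forall pt, ps < pt -> a pt * pt - a ps * ps >= (a ps - a pt) * C * eta.

Lemma prb_power_le (a : R -> R) (C eta ps pt : R) :
  0 < eta -> ps <= pt -> extra_power_dominates a C eta ps ->
  a ps * (ps / eta + C) <= a pt * (pt / eta + C).
Proof.
  intros Heta Hle Hdom.
  destruct (Rle_lt_or_eq_dec _ _ Hle) as [Hlt|<-]; [|lra].
  specialize (Hdom pt Hlt).
  apply Rmult_le_reg_r with eta; [exact Heta|].
  replace (a ps * (ps / eta + C) * eta) with (a ps * ps + a ps * C * eta)
    by (field; lra).
  replace (a pt * (pt / eta + C) * eta) with (a pt * pt + a pt * C * eta)
    by (field; lra).
  lra.
Qed.

Section Cell.

Variables (K am L : nat) (bbar : R) (Rmin beta I : nat -> R) (N eta C : R).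
Hypotheses (HL : (L < am)%nat) (Hbbar : 0 < bbar) (HN : 0 < N) (Heta : 0 < eta).
Hypotheses (HRmin : forall k, (k < K)%nat -> 0 < Rmin k)
  (Hbeta : forall k, (k < K)%nat -> 0 < beta k)
  (HI : forall k, (k < K)%nat -> 0 <= I k).

Local Notation a := (alpha am L bbar Rmin beta I N).
Local Notation P := (Pm K am L bbar Rmin beta I N eta C).

Lemma alpha_decreasing (k : nat) (p q : R) :
  (k < K)%nat -> 0 < p -> p < q -> a k q < a k p.
Proof.
  intros Hk Hp Hpq; unfold alpha.
  pose proof (HRmin k Hk); pose proof (HI k Hk).
  assert (Hgain : 0 < (INR am - INR L) * beta k / (I k + N)).
  { apply lt_INR in HL; pose proof (Hbeta k Hk).
    apply Rdiv_lt_0_compat; [apply Rmult_lt_0_compat|]; lra. }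
  assert (Hsnr : forall x, (INR am - INR L) * beta k * x / (I k + N)
                           = (INR am - INR L) * beta k / (I k + N) * x)
    by (intros x; field; lra).
  rewrite !Hsnr.
  assert (Hlog : 0 < bbar * log2 (1 + (INR am - INR L) * beta k / (I k + N) * p)).
  { apply Rmult_lt_0_compat; [exact Hbbar|]. apply log2_pos; nra. }
  unfold Rdiv at 1 3; apply Rmult_lt_compat_l; [assumption|].
  apply Rinv_lt_contravar.
  - apply Rmult_lt_0_compat; [exact Hlog|]. apply Rlt_trans with (1 := Hlog).
    apply Rmult_lt_compat_l; [exact Hbbar|]. apply log2_increasing; nra.
  - apply Rmult_lt_compat_l; [exact Hbbar|]. apply log2_increasing; nra.
Qed.

Lemma alpha_le_power (k : nat) (p q : R) :
  (k < K)%nat -> 0 < p -> a k p <= a k q -> q <= p.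
Proof.
  intros Hk Hp Hpq; apply Rnot_lt_le; intros Hlt.
  pose proof (alpha_decreasing k p q Hk Hp Hlt); lra.
Qed.

Lemma sum_alpha_le_power (p q : R) :
  (0 < K)%nat -> 0 < p ->
  sumUE K (fun k => a k p) <= sumUE K (fun k => a k q) -> q <= p.
Proof.
  intros HK Hp Hpq; apply Rnot_lt_le; intros Hlt.
  assert (sumUE K (fun k => a k q) < sumUE K (fun k => a k p))
    by (apply sumUE_lt; [exact HK|]; intros k Hk; apply alpha_decreasing; assumption).
  lra.
Qed.

Theorem common_power_optimal (ps p : R) :
  0 < p -> (forall k, (k < K)%nat -> extra_power_dominates (a k) C eta ps) ->
  sumUE K (fun k => a k p) <= sumUE K (fun k => a k ps) ->
  P (fun _ => ps) <= P (fun _ => p).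
Proof.
  intros Hp Hdom Hprb; apply sumUE_le; intros k Hk.
  apply prb_power_le; [exact Heta| |exact (Hdom k Hk)].
  apply sum_alpha_le_power; [lia|exact Hp|exact Hprb].
Qed.

Theorem individual_power_optimal (ps p : nat -> R) :
  (forall k, (k < K)%nat -> 0 < p k) ->
  (forall k, (k < K)%nat -> extra_power_dominates (a k) C eta (ps k)) ->
  (forall k, (k < K)%nat -> a k (p k) <= a k (ps k)) ->
  P ps <= P p.
Proof.
  intros Hp Hdom Hprb; apply sumUE_le; intros k Hk.
  apply prb_power_le; [exact Heta| |exact (Hdom k Hk)].
  apply alpha_le_power with k; auto.
Qed.

End Cell.

Theorem theorem2
  (K : nat)                      (* |mu(m)|, UEs indexed 0..K-1 *)
  (am : nat)                     (* active antennas a_m *)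
  (Nm : nat)                     (* available PRBs N_m *)
  (bbar : R) (Rmin beta I : nat -> R) (N eta C : R)
  (Hbbar : 0 < bbar)
  (HRmin : forall k, (k < K)%nat -> 0 < Rmin k)
  (Hbeta : forall k, (k < K)%nat -> 0 < beta k)
  (HI : forall k, (k < K)%nat -> 0 <= I k)
  (HN : 0 < N)
  (Heta : 0 < eta <= 1)
  (HC : 0 < C) :
  (* (i) NSM: L = 1, common power p for all UEs, shared PRBs *)
  (forall pstar : R,
     (1 < am)%nat ->
     0 < pstar ->
     sumUE K (fun k => alpha am 1 bbar Rmin beta I N k pstar) = INR Nm ->
     (forall k, (k < K)%nat -> forall pt, pstar < pt ->
        alpha am 1 bbar Rmin beta I N k pt * pt
        - alpha am 1 bbar Rmin beta I N k pstar * pstar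
        >= (alpha am 1 bbar Rmin beta I N k pstar
            - alpha am 1 bbar Rmin beta I N k pt) * C * eta) ->
     forall p : R, 0 < p ->
       sumUE K (fun k => alpha am 1 bbar Rmin beta I N k p) <= INR Nm ->
       Pm K am 1 bbar Rmin beta I N eta C (fun _ => pstar)
       <= Pm K am 1 bbar Rmin beta I N eta C (fun _ => p))
  /\
  (* (ii) SM: L = K, individual powers, each UE may use up to N_m PRBs *)
  (forall pstar : nat -> R,
     (K < am)%nat ->
     (forall k, (k < K)%nat -> 0 < pstar k) ->
     (forall k, (k < K)%nat -> alpha am K bbar Rmin beta I N k (pstar k) = INR Nm) ->
     (forall k, (k < K)%nat -> forall pt, pstar k < pt ->
        alpha am K bbar Rmin beta I N k pt * pt
        - alpha am K bbar Rmin beta I N k (pstar k) * pstar k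
        >= (alpha am K bbar Rmin beta I N k (pstar k)
            - alpha am K bbar Rmin beta I N k pt) * C * eta) ->
     forall p : nat -> R,
       (forall k, (k < K)%nat -> 0 < p k) ->
       (forall k, (k < K)%nat -> alpha am K bbar Rmin beta I N k (p k) <= INR Nm) ->
       Pm K am K bbar Rmin beta I N eta C pstar
       <= Pm K am K bbar Rmin beta I N eta C p).
Proof.
  split.
  - intros ps Ham _ Hfull Hdom p Hp Hprb.
    apply common_power_optimal; try assumption; [lra|].
    rewrite Hfull; exact Hprb.
  - intros ps Ham _ Hfull Hdom p Hp Hprb.
    apply individual_power_optimal; try assumption; [lra|].
    intros k Hk; rewrite Hfull by exact Hk; exact (Hprb k Hk).
Qed.
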